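(* Let $D$ be an integral domain, $\mathcal{T}$ a finite multiset of elements of $D$, and $f=\prod_{r\in\mathcal{T}}(x-r)$ (with multiplicities). If $Q$ is a non-zero prime ideal of $D$, then $\mathsf{d}(f)\subseteq Q$ if and only if $\mathcal{T}$ contains a complete system of residues modulo $Q$. Furthermore, suppose $D$ is a Dedekind domain, $Q$ is a non-zero prime ideal of $D$, and $\mathcal{T}=\mathcal{T}_0\uplus\mathcal{T}_1\uplus\cdots\uplus\mathcal{T}_e$ (multiset disjoint union) such that: (1) for all $1\le i\le e$, $\mathcal{T}_i$ is a complete system of residues modulo $Q$, and the respective representatives of the same residue class modulo $Q$ in the different $\mathcal{T}_i$ are congruent to each other modulo $Q^2$; (2) there exists $z\in D$ such that $s\not\equiv z \pmod Q$ for all $s\in\mathcal{T}_0$. Then $\mathsf{v}_Q(\mathsf{d}(f))=e$.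
   Context: For a polynomial $g$ with $g(D)\subseteq D$, the fixed divisor $\mathsf{d}(g)$ is the ideal of $D$ generated by $\{g(a)\mid a\in D\}$. For a Dedekind domain $D$ and a maximal ideal $Q$, $\mathsf{v}_Q$ is the $Q$-adic valuation; for a non-zero ideal $I$, $\mathsf{v}_Q(I)=\min\{\mathsf{v}_Q(a)\mid a\in I\}$ (the exponent of $Q$ in the prime factorization of $I$). For multisets $S,T$, $S\uplus T$ is the multiset with multiplicities added. *)

From HB Require Import structures.
From mathcomp Require Import all_boot all_order all_algebra.
From mathcomp Require Import fraction.
Set Implicit Arguments. Unset Strict Implicit. Unset Printing Implicit Defensive.
Import Order.TTheory GRing.Theory Num.Theory.
Local Open Scope ring_scope.

Section Ideals.
Variable D : idomainType.

Definition is_ideal (I : D -> Prop) : Prop :=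
  [/\ I 0, (forall x y, I x -> I y -> I (x + y)) & (forall a x, I x -> I (a * x))].

Definition prime_ideal (Q : D -> Prop) : Prop :=
  [/\ is_ideal Q, ~ Q 1 & (forall x y, Q (x * y) -> Q x \/ Q y)].

Definition nonzero_ideal (I : D -> Prop) : Prop := exists x, I x /\ x != 0.

Definition ideal_gen (S : D -> Prop) : D -> Prop :=
  fun x => exists s : seq (D * D),
    (forall p, p \in s -> S p.2) /\ x = \sum_(p <- s) p.1 * p.2.

Fixpoint ideal_pow (Q : D -> Prop) (n : nat) : D -> Prop :=
  match n with
  | 0 => fun _ => True
  | n'.+1 => ideal_gen (fun x => exists a b, ideal_pow Q n' a /\ Q b /\ x = a * b)
  end.

Definition fixed_divisor (g : {poly D}) : D -> Prop :=
  ideal_gen (fun y => exists a : D, y = g.[a]).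

Definition elt_val (Q : D -> Prop) (a : D) (n : nat) : Prop :=
  ideal_pow Q n a /\ ~ ideal_pow Q n.+1 a.

Definition ideal_val (Q : D -> Prop) (I : D -> Prop) (n : nat) : Prop :=
  (exists a, [/\ I a, a != 0 & elt_val Q a n]) /\
  (forall a m, I a -> a != 0 -> elt_val Q a m -> (n <= m)%N).

(* S (a multiset, as a seq) is a complete system of residues modulo Q:
   every x in D is congruent mod Q to exactly one entry of S (counted with
   multiplicity) *)
Definition complete_residues (Q : D -> Prop) (S : seq D) : Prop :=
  forall x : D, exists i : 'I_(size S),
    Q (x - nth 0 S i) /\ forall j : 'I_(size S), Q (x - nth 0 S j) -> j = i.

Definition submultiset (S T : seq D) : Prop := exists R, perm_eq T (S ++ R).

Definition noetherian : Prop :=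
  forall I, is_ideal I -> exists s : seq D,
    forall x, I x <-> ideal_gen (fun y => y \in s) x.

Definition dim_le1 : Prop :=
  forall P, prime_ideal P -> nonzero_ideal P ->
  forall J, is_ideal J -> (forall x, P x -> J x) ->
    (forall x, J x -> P x) \/ J 1.

Definition integrally_closed : Prop :=
  forall x : {fraction D},
    (exists p : {poly D}, p \is monic /\ (map_poly (@tofrac D) p).[x] = 0) ->
    exists d : D, x = tofrac d.

Definition dedekind : Prop := [/\ noetherian, dim_le1 & integrally_closed].

End Ideals.

From HB Require Import structures.
From mathcomp Require Import all_boot all_order all_algebra.
From mathcomp Require Import fraction ring.
From Stdlib Require Import Classical IndefiniteDescription.
Import Order.TTheory GRing.Theory Num.Theory.

Set Implicit Arguments.
Unset Strict Implicit.
Unset Printing Implicit Defensive.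
Local Open Scope ring_scope.

(* Evaluating f = \prod_(r <- T) (X - r) at a gives \prod_(r <- T) (a - r).  As Q is prime,
   f(a) lies in Q iff a is congruent to some r in T, so d(f) is contained in Q iff T meets every
   residue class modulo Q; one element of T per class then is a complete system of residues.
   Each complete system T_i contributes a factor in Q to every f(a), so d(f) is contained in Q^e.
   For the reverse bound, the localization of the Dedekind domain D at Q is a discrete valuation
   ring (a maximal colon ideal equals Q, and the determinant trick uses integral closedness), so
   there is a uniformizer pi and v_Q is additive.  Choose w congruent to z modulo Q and, using
   (1), congruent modulo Q^2 to every element of the T_i that is congruent to it modulo Q, and
   put a := w + pi.  No factor a - s with s in T_0 lies in Q, and each T_i has exactly one factor
   in Q, of valuation exactly 1; hence v_Q(f(a)) = e. *)

Section Ideals.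
Variable D : idomainType.
Implicit Types (I Q S : D -> Prop) (a b x y z : D).

Lemma ideal0 I : is_ideal I -> I 0. Proof. by case. Qed.

Lemma idealD I x y : is_ideal I -> I x -> I y -> I (x + y).
Proof. by case=> _ + _; apply. Qed.

Lemma idealMl I a x : is_ideal I -> I x -> I (a * x).
Proof. by case=> _ _; apply. Qed.

Lemma idealMr I x a : is_ideal I -> I x -> I (x * a).
Proof. by move=> idI Ix; rewrite mulrC; apply: idealMl. Qed.

Lemma idealN I x : is_ideal I -> I x -> I (- x).
Proof. by move=> idI Ix; rewrite -mulN1r; apply: idealMl. Qed.

Lemma idealB I x y : is_ideal I -> I x -> I y -> I (x - y).
Proof. by move=> idI Ix Iy; apply: idealD => //; apply: idealN. Qed.

Lemma idealBC I x y : is_ideal I -> I (x - y) -> I (y - x).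
Proof. by move=> idI Ixy; rewrite -opprB; apply: idealN. Qed.

Lemma idealB_trans I x y z : is_ideal I -> I (x - y) -> I (y - z) -> I (x - z).
Proof. by move=> idI Ixy Iyz; have := idealD idI Ixy Iyz; rewrite addrA subrK. Qed.

Lemma mem_ideal_gen S x : S x -> ideal_gen S x.
Proof.
move=> Sx; exists [:: (1, x)]; rewrite big_seq1 mul1r; split=> // p.
by rewrite inE => /eqP ->.
Qed.

Lemma ideal_gen_is_ideal S : is_ideal (ideal_gen S).
Proof.
split; first by exists [::]; rewrite big_nil.
- move=> _ _ [s [Ss ->]] [s' [Ss' ->]]; exists (s ++ s'); rewrite big_cat.
  by split=> // p; rewrite mem_cat => /orP[/Ss | /Ss'].
- move=> a _ [s [Ss ->]]; exists [seq (a * p.1, p.2) | p <- s]; split.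
    by move=> q /mapP[p sp ->] /=; apply: Ss.
  by rewrite mulr_sumr big_map; apply: eq_bigr => p _; rewrite mulrA.
Qed.

Lemma ideal_gen_min S I : is_ideal I -> (forall x, S x -> I x) ->
  forall x, ideal_gen S x -> I x.
Proof.
move=> idI SI _ [s [Ss ->]]; rewrite big_seq; apply: (big_ind I) => //.
- exact: ideal0.
- by move=> x y; apply: idealD.
- by move=> p sp; apply: idealMl => //; apply/SI/Ss.
Qed.

Lemma ideal_gen_seq_lincomb (s : seq D) x : ideal_gen (fun y => y \in s) x ->
  exists c : 'I_(size s) -> D, x = \sum_j c j * s`_j.
Proof.
move=> [l [ls ->]]; elim: l ls => [|p l IHl] ls.
  by exists (fun _ => 0); rewrite big_nil big1 // => j _; rewrite mul0r.
have sp : p.2 \in s by apply: ls; rewrite mem_head.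
rewrite big_cons; have [|c ->] := IHl; first by move=> q lq; apply: ls; rewrite inE lq orbT.
have ltks : (index p.2 s < size s)%N by rewrite index_mem.
pose k := Ordinal ltks; exists (fun j => c j + (if j == k then p.1 else 0)).
under [RHS]eq_bigr do rewrite mulrDl.
rewrite big_split /= addrC; congr (_ + _).
rewrite (bigD1 k) //= eqxx nth_index // big1 ?addr0 // => j /negbTE ->.
by rewrite mul0r.
Qed.

Lemma fixed_divisor_subP I (g : {poly D}) : is_ideal I ->
  (forall x, fixed_divisor g x -> I x) <-> (forall a, I g.[a]).
Proof.
move=> idI; split=> [sub a | Ig]; first by apply/sub/mem_ideal_gen; exists a.
by apply: ideal_gen_min => // _ [a ->].
Qed.

Lemma ideal_pow_is_ideal Q n : is_ideal (ideal_pow Q n).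
Proof. by case: n => [|n]; [split | exact: ideal_gen_is_ideal]. Qed.

Lemma ideal_powS_mul Q n a b : ideal_pow Q n a -> Q b -> ideal_pow Q n.+1 (a * b).
Proof. by move=> Qa Qb; apply: mem_ideal_gen; exists a, b. Qed.

Lemma ideal_pow1 Q x : is_ideal Q -> ideal_pow Q 1 x <-> Q x.
Proof.
move=> idQ; split; last by move=> Qx; rewrite -[x]mul1r; apply: ideal_powS_mul.
by apply: ideal_gen_min => // _ [a [b [_ [Qb ->]]]]; apply: idealMl.
Qed.

Lemma ideal_pow_le Q m n x : (m <= n)%N -> ideal_pow Q n x -> ideal_pow Q m x.
Proof.
have powS k y : ideal_pow Q k.+1 y -> ideal_pow Q k y.
  elim: k y => [//|k IHk] y; apply: ideal_gen_min; first exact: ideal_pow_is_ideal.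
  by move=> _ [a [b [Qa [Qb ->]]]]; apply: ideal_powS_mul => //; apply: IHk.
move=> /subnKC <-; elim: (n - m)%N => [|k IHk]; first by rewrite addn0.
by rewrite addnS => /powS /IHk.
Qed.

Lemma ideal_pow_expr Q n x : Q x -> ideal_pow Q n (x ^+ n).
Proof. by move=> Qx; elim: n => [//|n IHn]; rewrite exprSr; apply: ideal_powS_mul. Qed.

Lemma ideal_pow_prod Q (T : eqType) (r : seq T) (F : T -> D) :
  (forall i, i \in r -> Q (F i)) -> ideal_pow Q (size r) (\prod_(i <- r) F i).
Proof.
elim: r => [//|i r IHr] QF; rewrite big_cons mulrC.
by apply: ideal_powS_mul; [apply: IHr => j rj |]; apply: QF; rewrite inE ?rj ?eqxx ?orbT.
Qed.

Lemma ideal_prod Q (T : eqType) (r : seq T) (F : T -> D) i :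
  is_ideal Q -> i \in r -> Q (F i) -> Q (\prod_(j <- r) F j).
Proof. by move=> idQ ri QFi; rewrite (big_rem i) //=; apply: idealMr. Qed.

Lemma prime_ideal_ideal Q : prime_ideal Q -> is_ideal Q. Proof. by case. Qed.

Lemma prime_ideal_proper Q : prime_ideal Q -> ~ Q 1. Proof. by case. Qed.

Lemma prime_notinM Q x y : prime_ideal Q -> ~ Q x -> ~ Q y -> ~ Q (x * y).
Proof. by case=> _ _ Qprime nQx nQy /Qprime[]. Qed.

Lemma prime_ideal_prod Q (T : eqType) (r : seq T) (F : T -> D) :
  prime_ideal Q -> Q (\prod_(i <- r) F i) -> exists2 i, i \in r & Q (F i).
Proof.
case=> _ nQ1 Qprime; elim: r => [|i r IHr]; first by rewrite big_nil => /nQ1.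
rewrite big_cons => /Qprime[QFi | /IHr[j rj QFj]]; first by exists i; rewrite ?mem_head.
by exists j; rewrite // inE rj orbT.
Qed.

Lemma prime_notin_prod Q (T : Type) (r : seq T) (P : pred T) (F : T -> D) :
  prime_ideal Q -> (forall i, P i -> ~ Q (F i)) -> ~ Q (\prod_(i <- r | P i) F i).
Proof.
move=> Qprime nQF; apply: (big_ind (fun x => ~ Q x)) => //.
- exact: prime_ideal_proper.
- by move=> x y; apply: prime_notinM.
Qed.

Lemma elt_val0 Q x : is_ideal Q -> ~ Q x -> elt_val Q x 0.
Proof. by move=> idQ nQx; split=> // /(ideal_pow1 _ idQ). Qed.

Lemma elt_val_neq0 Q x n : elt_val Q x n -> x != 0.
Proof.
case=> _; apply: contra_notN => /eqP ->; apply: ideal0; exact: ideal_pow_is_ideal.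
Qed.

Lemma ideal_val_by_witness Q I n a : (forall x, I x -> ideal_pow Q n x) ->
  I a -> elt_val Q a n -> ideal_val Q I n.
Proof.
move=> Ipow Ia val_a; split; first by exists a; split=> //; apply: elt_val_neq0 val_a.
move=> x m Ix _ [_ npow]; rewrite leqNgt; apply/negP => lt_mn.
by apply/npow/(ideal_pow_le lt_mn)/Ipow.
Qed.

Lemma horner_prod_XsubC (T : seq D) a :
  (\prod_(r <- T) ('X - r%:P)).[a] = \prod_(r <- T) (a - r).
Proof. by rewrite horner_prod; apply: eq_bigr => r _; rewrite hornerXsubC. Qed.

End Ideals.

Section ResidueSystems.
Variables (D : idomainType) (Q : D -> Prop).
Hypothesis idQ : is_ideal Q.

Lemma complete_residues_of_cover (S : seq D) :
  (forall x, exists2 s, s \in S & Q (x - s)) ->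
  (forall i j, (i < size S)%N -> (j < size S)%N -> Q (S`_i - S`_j) -> i = j) ->
  complete_residues Q S.
Proof.
move=> cover sepS x; have [s Ss Qxs] := cover x.
have ltiS : (index s S < size S)%N by rewrite index_mem.
exists (Ordinal ltiS); rewrite /= nth_index //; split=> // j Qxj.
apply: val_inj; apply: sepS => //=; rewrite nth_index //.
exact: idealB_trans idQ (idealBC idQ Qxj) Qxs.
Qed.

Lemma residue_reps_subseq (T : seq D) : exists S, [/\ subseq S T,
  forall r, r \in T -> exists2 s, s \in S & Q (r - s) &
  forall i j, (i < size S)%N -> (j < size S)%N -> Q (S`_i - S`_j) -> i = j].
Proof.
elim: T => [|r T [S [subST coverT sepS]]]; first by exists [::].
case: (classic (exists2 s, s \in S & Q (r - s))) => [rS | nrS].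
  exists S; split=> // [|r']; first exact: subseq_trans subST (subseq_cons T r).
  by rewrite inE => /predU1P[-> //|]; apply: coverT.
exists (r :: S); split=> [|r'|]; first by rewrite /= eqxx.
  rewrite inE => /predU1P[->|/coverT[s Ss Qs]].
    by exists r; [apply: mem_head | rewrite subrr; apply: ideal0].
  by exists s; rewrite // inE Ss orbT.
have nQrS k : (k < size S)%N -> ~ Q (r - S`_k).
  by move=> ltkS Qrk; apply: nrS; exists S`_k; rewrite ?mem_nth.
case=> [|i] [|j] //=; rewrite ?ltnS => ltiS ltjS.
- by move/(nQrS _ ltjS).
- by move/(idealBC idQ)/(nQrS _ ltiS).
- by move/(sepS _ _ ltiS ltjS) ->.
Qed.

End ResidueSystems.

Lemma fixed_divisor_sub_primeP (D : idomainType) (Q : D -> Prop) (T : seq D) :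
  prime_ideal Q ->
  (forall x, fixed_divisor (\prod_(r <- T) ('X - r%:P)) x -> Q x) <->
  exists S, submultiset S T /\ complete_residues Q S.
Proof.
move=> Qprime; have idQ := prime_ideal_ideal Qprime.
rewrite (fixed_divisor_subP _ idQ); split=> [Qf | [S [[R permT] resS]] a].
  have [S [subST coverT sepS]] := residue_reps_subseq idQ T.
  exists S; split; first by have [R permT] := perm_to_subseq subST; exists R.
  have coverD a : exists2 s, s \in S & Q (a - s).
    have := Qf a; rewrite horner_prod_XsubC => /(prime_ideal_prod Qprime)[r rT Qar].
    have [s Ss Qrs] := coverT r rT; exists s => //.
    exact: idealB_trans idQ Qar Qrs.
  exact: (complete_residues_of_cover idQ coverD sepS).
rewrite horner_prod_XsubC; have [i [Qai _]] := resS a.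
apply: (ideal_prod (i := S`_i)) idQ _ Qai.
by rewrite (perm_mem permT) mem_cat mem_nth.
Qed.

Lemma horner_prod_XsubC_blocks (D : idomainType) (T T0 : seq D) e (Ts : nat -> seq D) a :
  perm_eq T (T0 ++ flatten [seq Ts i | i <- iota 1 e]) ->
  (\prod_(r <- T) ('X - r%:P)).[a] =
    \prod_(r <- T0) (a - r) * \prod_(i <- iota 1 e) \prod_(s <- Ts i) (a - s).
Proof.
by move=> permT; rewrite horner_prod_XsubC (perm_big _ permT) big_cat big_flatten big_map.
Qed.

Lemma mem_iota1 (i e : nat) : (i \in iota 1 e) = (1 <= i <= e)%N.
Proof. by rewrite mem_iota add1n ltnS. Qed.

Lemma fixed_divisor_sub_pow (D : idomainType) (Q : D -> Prop) (T T0 : seq D) e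
    (Ts : nat -> seq D) :
  is_ideal Q -> perm_eq T (T0 ++ flatten [seq Ts i | i <- iota 1 e]) ->
  (forall i, (1 <= i <= e)%N -> complete_residues Q (Ts i)) ->
  forall x, fixed_divisor (\prod_(r <- T) ('X - r%:P)) x -> ideal_pow Q e x.
Proof.
move=> idQ permT resTs; apply/(fixed_divisor_subP _ (ideal_pow_is_ideal Q e)) => a.
rewrite (horner_prod_XsubC_blocks _ permT); apply: idealMl; first exact: ideal_pow_is_ideal.
rewrite -[in X in ideal_pow _ X _](size_iota 1 e); apply: ideal_pow_prod => i.
rewrite mem_iota1 => lei; have [j [Qaj _]] := resTs i lei a.
by apply: (ideal_prod (i := (Ts i)`_j)) idQ _ Qaj; apply: mem_nth.
Qed.

Lemma exists_block_representative (D : idomainType) (Q : D -> Prop) e (Ts : nat -> seq D) z :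
  is_ideal Q -> (forall i, (1 <= i <= e)%N -> complete_residues Q (Ts i)) ->
  (forall i j s t, (1 <= i <= e)%N -> (1 <= j <= e)%N ->
     s \in Ts i -> t \in Ts j -> Q (s - t) -> ideal_pow Q 2 (s - t)) ->
  exists2 w, Q (w - z) & forall i s, (1 <= i <= e)%N -> s \in Ts i ->
    Q (w - s) -> ideal_pow Q 2 (w - s).
Proof.
case: e => [|e] idQ resTs congTs.
  by exists z => [|[]] //; rewrite subrr; apply: ideal0.
have [j [Qzj _]] := resTs 1%N isT z.
exists (Ts 1%N)`_j => [|i s lei]; first exact: idealBC idQ Qzj.
exact: (congTs 1%N i _ s isT lei (mem_nth 0 (ltn_ord j))).
Qed.

Section Localization.
Variables (D : idomainType) (Q : D -> Prop).
Hypothesis Qprime : prime_ideal Q.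

(* [local_dvd a b]: [a] divides [b] in the localization of [D] at [Q]. *)
Definition local_dvd (a b : D) : Prop := exists t c, ~ Q t /\ t * b = a * c.

Lemma local_dvd_is_ideal a : is_ideal (local_dvd a).
Proof.
have nQ1 := prime_ideal_proper Qprime.
split; first by exists 1, 0; rewrite !mulr0.
- move=> x y [t [c [nQt tE]]] [t' [c' [nQt' t'E]]].
  exists (t * t'), (t' * c + t * c'); split; first exact: prime_notinM.
  by rewrite mulrDr mulrDr mulrAC tE -mulrA t'E; ring.
- move=> b x [t [c [nQt tE]]]; exists t, (b * c); split=> //.
  by rewrite mulrCA tE mulrCA.
Qed.

Lemma local_dvd_colon_is_ideal a b : is_ideal (fun d => local_dvd a (d * b)).
Proof.
case: (local_dvd_is_ideal a) => dvd0 dvdD dvdM; split; first by rewrite mul0r.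
- by move=> x y dx dy; rewrite mulrDl; apply: dvdD.
- by move=> c x dx; rewrite -mulrA; apply: dvdM.
Qed.

Lemma local_dvdM a a' b b' :
  local_dvd a b -> local_dvd a' b' -> local_dvd (a * a') (b * b').
Proof.
move=> [t [c [nQt tE]]] [t' [c' [nQt' t'E]]].
exists (t * t'), (c * c'); split; first exact: prime_notinM.
by rewrite mulrACA tE t'E mulrACA.
Qed.

Lemma local_dvd_common a (s : seq D) : (forall x, x \in s -> local_dvd a x) ->
  exists2 t, ~ Q t & forall x, x \in s -> exists c, t * x = a * c.
Proof.
elim: s => [|x s IHs] dvds; first by exists 1 => //; apply: prime_ideal_proper.
have [t nQt tE] := IHs (fun y sy => dvds y (mem_behead (s := x :: s) sy)).
have [t' [c [nQt' t'E]]] := dvds x (mem_head x s).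
exists (t * t'); first exact: prime_notinM.
move=> y; rewrite inE => /predU1P[-> | sy]; first by exists (t * c); rewrite -mulrA t'E mulrCA.
by have [c' c'E] := tE y sy; exists (c' * t'); rewrite mulrAC c'E -mulrA.
Qed.

Lemma colon_sub_prime a b d : ~ local_dvd a b -> local_dvd a (d * b) -> Q d.
Proof.
move=> nab [t [c [nQt tE]]]; apply: NNPP => nQd; apply: nab.
by exists (t * d), c; split; [exact: prime_notinM | rewrite -mulrA].
Qed.

Lemma colon_maximal_prime a b : ~ local_dvd a b ->
  (forall b', ~ local_dvd a b' ->
     (forall d, local_dvd a (d * b) -> local_dvd a (d * b')) ->
     forall d, local_dvd a (d * b') -> local_dvd a (d * b)) ->
  prime_ideal (fun d => local_dvd a (d * b)).
Proof.
move=> nab bmax; split; [exact: local_dvd_colon_is_ideal | by rewrite mul1r |].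
move=> x y dxy; case: (classic (local_dvd a (x * b))) => [|nxb]; [by left | right].
apply: (bmax (x * b)) => [//|d db|]; last by rewrite mulrA [y * x]mulrC.
by rewrite mulrCA; apply: idealMl db; apply: local_dvd_is_ideal.
Qed.

End Localization.

Section Noetherian.
Variable D : idomainType.
Hypothesis noethD : noetherian D.

Lemma noetherian_chain_stationary (J : nat -> D -> Prop) :
  (forall n, is_ideal (J n)) -> (forall n x, J n x -> J n.+1 x) ->
  exists N, forall x, J N.+1 x -> J N x.
Proof.
move=> idJ incrJ.
have monoJ m n x : (m <= n)%N -> J m x -> J n x.
  move=> /subnKC <-; elim: (n - m)%N => [|k IHk]; first by rewrite addn0.
  by rewrite addnS => /IHk /incrJ.
pose U x := exists n, J n x.
have idU : is_ideal U.
  split; first by exists 0%N; apply: ideal0.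
  - move=> x y [m Jx] [n Jy]; exists (maxn m n).
    by apply: idealD; [| apply: monoJ Jx; rewrite leq_maxl | apply: monoJ Jy; rewrite leq_maxr].
  - by move=> a x [n Jx]; exists n; apply: idealMl.
have [s genU] := noethD idU.
have Us y : y \in s -> U y by move=> sy; apply/genU/mem_ideal_gen.
have [N sJN] : exists N, forall y, y \in s -> J N y.
  elim: s {genU} Us => [|y s IHs] Us; first by exists 0%N.
  have [N sJN] := IHs (fun z sz => Us z (mem_behead (s := y :: s) sz)).
  have [M JMy] := Us y (mem_head y s).
  exists (maxn N M) => z; rewrite inE => /predU1P[-> | sz].
    by apply: monoJ JMy; rewrite leq_maxr.
  by apply: monoJ (sJN z sz); rewrite leq_maxl.
exists N => x JSx; have /genU : U x by exists N.+1.
exact: ideal_gen_min (idJ N) sJN x.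
Qed.

Lemma noetherian_maximal (I : Type) (F : I -> D -> Prop) (X : I -> Prop) i0 :
  (forall i, X i -> is_ideal (F i)) -> X i0 ->
  exists2 i, X i & forall j, X j -> (forall x, F i x -> F j x) -> forall x, F j x -> F i x.
Proof.
move=> idF Xi0; apply: NNPP => nomax.
have next i : exists j, X i ->
    [/\ X j, forall x, F i x -> F j x & exists2 x, F j x & ~ F i x].
  case: (classic (X i)) => Xi; last by exists i.
  apply: NNPP => nonext; apply: nomax; exists i => // j Xj Fij x Fjx.
  by apply: NNPP => nFix; apply: nonext; exists j => _; split=> //; exists x.
have [g gP] := functional_choice _ next.
pose chain n := iter n g i0.
have Xchain n : X (chain n) by elim: n => [//|n IHn]; case: (gP _ IHn).
have incr n x : F (chain n) x -> F (chain n.+1) x by case: (gP _ (Xchain n)) => _ + _; apply.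
have [N stat] := noetherian_chain_stationary (fun n => idF _ (Xchain n)) incr.
by have [_ _ [x Fx nFx]] := gP _ (Xchain N); apply/nFx/stat.
Qed.

End Noetherian.

Lemma integrally_closed_dvd (D : idomainType) (s : seq D) a b :
  integrally_closed D -> a != 0 -> has (fun g => g != 0) s ->
  (forall i : 'I_(size s), exists c : 'I_(size s) -> D, b * s`_i = a * \sum_j c j * s`_j) ->
  exists d, b = a * d.
Proof.
move=> intD a_neq0 s_nz /functional_choice[cf cfE].
(* [b / a] is an eigenvalue of the transposed coefficient matrix, hence a root of its
   characteristic polynomial, which is monic over [D]. *)
pose C : 'M[D]_(size s) := \matrix_(j, i) cf i j.
pose y := tofrac b / tofrac a.
have a_neq0' : tofrac a != 0 by rewrite tofrac_eq0.
have : eigenvalue (map_mx (@tofrac D) C) y.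
  apply/eigenvalueP; exists (\row_j tofrac s`_j).
    apply/rowP => i; rewrite !mxE.
    transitivity (tofrac (\sum_j cf i j * s`_j)).
      by rewrite rmorph_sum; apply: eq_bigr => j _; rewrite !mxE mulrC rmorphM.
    by rewrite /y mulrAC -rmorphM cfE rmorphM mulrC mulrA mulVf // mul1r.
  have /hasP[g sg g_neq0] := s_nz.
  have ltgs : (index g s < size s)%N by rewrite index_mem.
  apply/eqP => /rowP/(_ (Ordinal ltgs)); rewrite !mxE /= nth_index //.
  by move/eqP; rewrite tofrac_eq0 (negbTE g_neq0).
rewrite eigenvalue_root_char -map_char_poly => /rootP y_root.
have [|d dE] := intD y; first by exists (char_poly C); split; [exact: char_poly_monic |].
by exists d; apply/eqP; rewrite -tofrac_eq tofracM -dE /y mulrC divfK.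
Qed.

Section Uniformizer.
Variables (D : idomainType) (Q : D -> Prop).
Hypotheses (Qprime : prime_ideal Q) (Qnz : nonzero_ideal Q) (dedD : dedekind D).

Let idQ := prime_ideal_ideal Qprime.

(* [b / a] lies in the inverse of [Q] but not in the localization at [Q]. *)
Lemma exists_fractional_inverse : exists a b,
  [/\ a != 0, ~ local_dvd Q a b & forall q, Q q -> local_dvd Q a (q * b)].
Proof.
have [a [Qa a_neq0]] := Qnz; case: dedD => noethD dimD _.
have na1 : ~ local_dvd Q a 1.
  by case=> t [c [nQt tE]]; apply: nQt; rewrite -[t]mulr1 tE; apply: idealMr.
have [b nab bmax] := noetherian_maximal noethD
  (F := fun b d => local_dvd Q a (d * b)) (X := fun b => ~ local_dvd Q a b)
  (fun b _ => local_dvd_colon_is_ideal Qprime a b) na1.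
exists a, b; split=> // q Qq.
have colon_nz : nonzero_ideal (fun d => local_dvd Q a (d * b)).
  by exists a; split=> //; exists 1, b; rewrite mul1r; split=> //; apply: prime_ideal_proper.
have colonQ d : local_dvd Q a (d * b) -> Q d := colon_sub_prime Qprime nab.
have [QsubColon | /(prime_ideal_proper Qprime) //] :=
  dimD _ (colon_maximal_prime Qprime nab bmax) colon_nz Q idQ colonQ.
exact: QsubColon.
Qed.

(* The hypotheses say that [b / a] maps [Q D_Q] into itself, so by the determinant trick it is
   integral over [D]. *)
Lemma local_dvd_of_inverse_stable a b : a != 0 ->
  (forall q, Q q -> local_dvd Q a (q * b)) ->
  (forall q t u, Q q -> ~ Q t -> t * (q * b) = a * u -> Q u) ->
  local_dvd Q a b.
Proof.
move=> a_neq0 Qab stable; case: dedD => noethD _ intD.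
have [gens genQ] := noethD Q idQ.
have [t nQt tE] : exists2 t, ~ Q t & forall x, x \in [seq g * b | g <- gens] ->
    exists c, t * x = a * c.
  by apply: local_dvd_common => // _ /mapP[g gs ->]; apply/Qab/genQ/mem_ideal_gen.
have gens_nz : has (fun g => g != 0) gens.
  have [q [Qq q_neq0]] := Qnz; apply: contraTT q_neq0 => /hasPn gens0.
  have [c ->] := ideal_gen_seq_lincomb (proj1 (genQ q) Qq).
  rewrite negbK big1 // => j _.
  by have /negPn/eqP -> := gens0 _ (mem_nth 0 (ltn_ord j)); rewrite mulr0.
have coef (i : 'I_(size gens)) :
    exists c : 'I_(size gens) -> D, t * b * gens`_i = a * \sum_j c j * gens`_j.
  have gi : gens`_i \in gens := mem_nth 0 (ltn_ord i).
  have [c cE] := tE _ (map_f (fun g => g * b) gi).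
  have Qc : Q c by apply: stable cE => //; apply/genQ/mem_ideal_gen.
  have [cf cfE] := ideal_gen_seq_lincomb (proj1 (genQ c) Qc).
  by exists cf; rewrite -cfE -cE -mulrA [b * _]mulrC.
have [d dE] := integrally_closed_dvd intD a_neq0 gens_nz coef.
by exists t, d.
Qed.

Lemma exists_uniformizer : exists2 pi, Q pi & forall q, Q q -> local_dvd Q pi q.
Proof.
have [a [b [a_neq0 nab Qab]]] := exists_fractional_inverse.
case: (classic (exists q0 t u, [/\ Q q0, ~ Q t, ~ Q u & t * (q0 * b) = a * u])); last first.
  move=> nounit; case: nab; apply: local_dvd_of_inverse_stable => // q t u Qq nQt tE.
  by apply: NNPP => nQu; apply: nounit; exists q, t, u.
(* Some [q0 b / a] is a unit at [Q], so [q0] divides every element of [Q] locally. *)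
move=> [q0 [t [u [Qq0 nQt nQu tE]]]]; exists q0 => // q Qq.
have [t' [c [nQt' t'E]]] := Qab q Qq.
exists (u * t'), (t * c); split; first exact: prime_notinM.
apply: (mulfI a_neq0); have -> : a * (u * t' * q) = a * u * (t' * q) by ring.
rewrite -tE; have -> : t * (q0 * b) * (t' * q) = t * q0 * (t' * (q * b)) by ring.
by rewrite t'E; ring.
Qed.

End Uniformizer.

Section Valuation.
Variables (D : idomainType) (Q : D -> Prop) (pi : D).
Hypotheses (Qprime : prime_ideal Q) (Qnz : nonzero_ideal Q) (dimD : dim_le1 D).
Hypotheses (Qpi : Q pi) (pi_unif : forall q, Q q -> local_dvd Q pi q).

Let idQ := prime_ideal_ideal Qprime.
Let nQ1 := prime_ideal_proper Qprime.

Lemma prime_comaximal s : ~ Q s -> exists u q, Q q /\ u * s + q = 1.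
Proof.
move=> nQs; pose J x := exists u q, Q q /\ u * s + q = x.
have idJ : is_ideal J.
  split; first by exists 0, 0; rewrite mul0r addr0; split=> //; apply: ideal0.
  - move=> _ _ [u [q [Qq <-]]] [u' [q' [Qq' <-]]]; exists (u + u'), (q + q').
    by split; [apply: idealD | ring].
  - move=> c _ [u [q [Qq <-]]]; exists (c * u), (c * q).
    by split; [apply: idealMl | ring].
have QJ x : Q x -> J x by exists 0, x; rewrite mul0r add0r.
case: (dimD Qprime Qnz idJ QJ) => [/(_ s) JQ | //].
by case: nQs; apply: JQ; exists 1, 0; rewrite mul1r addr0; split=> //; apply: ideal0.
Qed.

Lemma ideal_pow_cancel n s x : ~ Q s -> ideal_pow Q n (s * x) -> ideal_pow Q n x.
Proof.
move=> nQs Qsx; have [u [q [Qq uqE]]] := prime_comaximal nQs.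
have [w [r [Qr wrE]]] : exists w r, ideal_pow Q n r /\ s * w + r = 1.
  elim: n {Qsx} => [|n [w [r [Qr wrE]]]]; first by exists 0, 1; rewrite mulr0 add0r.
  exists (w * u * s + w * q + r * u), (r * q); split; first exact: ideal_powS_mul.
  by rewrite -[RHS]mul1r -{1}uqE -wrE; ring.
rewrite -[x]mul1r -wrE mulrDl; apply: idealD; first exact: ideal_pow_is_ideal.
  by rewrite mulrAC mulrC; apply: idealMl => //; exact: ideal_pow_is_ideal.
by apply: idealMr => //; exact: ideal_pow_is_ideal.
Qed.

Lemma uniformizer_neq0 : pi != 0.
Proof.
have [q [Qq q_neq0]] := Qnz; have [u [d [nQu uE]]] := pi_unif Qq.
apply: contra_notN nQu => /eqP pi0; move: uE; rewrite pi0 mul0r => /eqP.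
by rewrite mulf_eq0 (negbTE q_neq0) orbF => /eqP ->; apply: ideal0.
Qed.

Lemma ideal_powP n x : ideal_pow Q n x <-> local_dvd Q (pi ^+ n) x.
Proof.
split; last first.
  move=> [u [c [nQu uE]]]; apply: (ideal_pow_cancel nQu); rewrite uE.
  by apply: idealMr; [exact: ideal_pow_is_ideal | exact: ideal_pow_expr].
elim: n x => [|n IHn] x; first by exists 1, x; rewrite expr0 !mul1r.
apply: ideal_gen_min; first exact: local_dvd_is_ideal.
move=> _ [y [q [Qy [Qq ->]]]]; rewrite exprSr.
by apply: local_dvdM => //; [apply: IHn | apply: pi_unif].
Qed.

Lemma elt_valP m x :
  elt_val Q x m <-> exists u c, [/\ ~ Q u, ~ Q c & u * x = pi ^+ m * c].
Proof.
split=> [[/ideal_powP[u [c [nQu uE]]] npow] | [u [c [nQu nQc uE]]]].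
  exists u, c; split=> // Qc; apply/npow/ideal_powP.
  have [u' [d [nQu' u'E]]] := pi_unif Qc.
  exists (u' * u), d; split; first exact: prime_notinM.
  by rewrite -mulrA uE mulrCA u'E exprSr mulrA.
split; first by apply/ideal_powP; exists u, c.
move/ideal_powP => [u' [c' [nQu' u'E]]].
have : pi ^+ m * (u' * c) = pi ^+ m * (pi * (u * c')).
  by rewrite mulrCA -uE mulrCA u'E exprSr; ring.
move/(mulfI (expf_neq0 m uniformizer_neq0)) => u'cE.
have : Q (u' * c) by rewrite u'cE; apply: idealMr.
by case: Qprime => _ _ /[apply] [[]].
Qed.

Lemma elt_val_uniformizer : elt_val Q pi 1.
Proof. by apply/elt_valP; exists 1, 1; rewrite mul1r mulr1. Qed.

Lemma elt_valM x y m n : elt_val Q x m -> elt_val Q y n -> elt_val Q (x * y) (m + n).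
Proof.
move=> /elt_valP[u [c [nQu nQc uE]]] /elt_valP[u' [c' [nQu' nQc' u'E]]].
apply/elt_valP; exists (u * u'), (c * c'); split; try exact: prime_notinM.
by rewrite mulrACA uE u'E exprD mulrACA.
Qed.

Lemma elt_val_prod (T : eqType) (r : seq T) (F : T -> D) (m : T -> nat) :
  (forall i, i \in r -> elt_val Q (F i) (m i)) ->
  elt_val Q (\prod_(i <- r) F i) (\sum_(i <- r) m i).
Proof.
elim: r => [|i r IHr] valF; first by rewrite !big_nil; apply: elt_val0.
rewrite !big_cons; apply: elt_valM; first by apply: valF; rewrite mem_head.
by apply: IHr => j rj; apply: valF; rewrite inE rj orbT.
Qed.

Lemma elt_val_residue_block (S : seq D) a w :
  complete_residues Q S -> elt_val Q (a - w) 1 ->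
  (forall s, s \in S -> Q (w - s) -> ideal_pow Q 2 (w - s)) ->
  elt_val Q (\prod_(s <- S) (a - s)) 1.
Proof.
move=> resS [/(ideal_pow1 _ idQ) Qaw naw] wS.
have [j [Qaj j_uniq]] := resS a; have Sj : S`_j \in S := mem_nth 0 (ltn_ord j).
rewrite (big_nth 0) big_mkord (bigD1 j) //= -[1%N]addn0; apply: elt_valM.
  split; first exact/(ideal_pow1 _ idQ).
  have Qwj : Q (w - S`_j) := idealB_trans idQ (idealBC idQ Qaw) Qaj.
  move=> Q2aj; apply: naw; have := idealB (ideal_pow_is_ideal Q 2) Q2aj (wS _ Sj Qwj).
  by rewrite opprB addrA subrK.
apply: elt_val0 => //; apply: prime_notin_prod => // k /eqP nkj Qak.
exact/nkj/j_uniq.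
Qed.

Lemma ideal_val_fixed_divisor (T T0 : seq D) e (Ts : nat -> seq D) :
  perm_eq T (T0 ++ flatten [seq Ts i | i <- iota 1 e]) ->
  (forall i, (1 <= i <= e)%N -> complete_residues Q (Ts i)) ->
  (forall i j s t, (1 <= i <= e)%N -> (1 <= j <= e)%N ->
     s \in Ts i -> t \in Ts j -> Q (s - t) -> ideal_pow Q 2 (s - t)) ->
  (exists z, forall s, s \in T0 -> ~ Q (s - z)) ->
  ideal_val Q (fixed_divisor (\prod_(r <- T) ('X - r%:P))) e.
Proof.
move=> permT resTs congTs [z T0z].
have [w Qwz wTs] := exists_block_representative z idQ resTs congTs.
pose a := w + pi.
apply: (ideal_val_by_witness (a := (\prod_(r <- T) ('X - r%:P)).[a])).
- exact: fixed_divisor_sub_pow idQ permT resTs.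
- by apply: mem_ideal_gen; exists a.
rewrite (horner_prod_XsubC_blocks _ permT) -[e]add0n; apply: elt_valM.
  apply: elt_val0 => //; rewrite big_seq; apply: prime_notin_prod => // r rT0 Qar.
  apply: (T0z r rT0); have -> : r - z = (w - z) + pi - (a - r) by rewrite /a; ring.
  exact: idealB idQ (idealD idQ Qwz Qpi) Qar.
rewrite -[in X in elt_val _ _ X](size_iota 1 e) -sum1_size.
apply: elt_val_prod => i; rewrite mem_iota1 => lei.
apply: elt_val_residue_block (resTs i lei) _ (fun s => wTs i s lei).
by rewrite /a addrC addKr; apply: elt_val_uniformizer.
Qed.

End Valuation.

Theorem lemma3p2 (D : idomainType) :
  (forall (T : seq D) (Q : D -> Prop),
     prime_ideal Q -> nonzero_ideal Q ->
     ((forall x, fixed_divisor (\prod_(r <- T) ('X - r%:P)) x -> Q x) <->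
      exists S, submultiset S T /\ complete_residues Q S)) /\
  (dedekind D ->
   forall (Q : D -> Prop) (T T0 : seq D) (e : nat) (Ts : nat -> seq D),
     prime_ideal Q -> nonzero_ideal Q ->
     perm_eq T (T0 ++ flatten [seq Ts i | i <- iota 1 e]) ->
     (forall i, (1 <= i <= e)%N -> complete_residues Q (Ts i)) ->
     (forall i j s t, (1 <= i <= e)%N -> (1 <= j <= e)%N ->
        s \in Ts i -> t \in Ts j -> Q (s - t) -> ideal_pow Q 2 (s - t)) ->
     (exists z : D, forall s, s \in T0 -> ~ Q (s - z)) ->
     ideal_val Q (fixed_divisor (\prod_(r <- T) ('X - r%:P))) e).
Proof.
split=> [T Q Qprime _ | dedD Q T T0 e Ts Qprime Qnz].
  exact: fixed_divisor_sub_primeP.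
have [pi Qpi pi_unif] := exists_uniformizer Qprime Qnz dedD.
by case: dedD => _ dimD _; exact: (ideal_val_fixed_divisor Qprime Qnz dimD Qpi pi_unif).
Qed.
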